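(* For $n\in\mathbb{Z}$ let $f^{(n)}(x)=x^{2^n}$ on $[0,1]$ and $u^{(n)}=2^{-2^n}$, so that $]0,1[=\bigcup_{n\in\mathbb{Z}}\,]u^{(n+1)},u^{(n)}]$ (disjoint union). Define $U_1:[0,1]^2\to[0,1]$ by $U_1(x,y)=1$ if $\max(x,y)=1$; $U_1(x,y)=0$ if $\min(x,y)=0$ and $\max(x,y)<1$; and $$U_1(x,y)=f^{(n+m)}\big(\min(f^{(-n)}(x),f^{(-m)}(y))\big)\quad\text{if }x\in\,]u^{(n+1)},u^{(n)}],\ y\in\,]u^{(m+1)},u^{(m)}],\ n,m\in\mathbb{Z}.$$ Then: (a) $U_1$ is a disjunctive uninorm with neutral element $1/2$; (b) for each $n\in\mathbb{Z}$, $U_1(u^{(n)},y)=f^{(n)}(y)$ for all $y\in[0,1]$, so each such cut is continuous, strictly increasing with range $[0,1]$; (c) $U_1$ does not have continuous underlying functions; (d) with $N_1(0)=1$, $N_1(1)=0$, $N_1(x)=2^{-2^{-\log_2(-\log_2 x)}}$ for $x\in\,]0,1[$, and $N_2(x)=(N_1(x))^2$, both $N_1,N_2$ are continuous strictly decreasing fuzzy negations; the function $U_2(x,y)=U_1(2^{-1/2},U_1(x,y))$ is a disjunctive uninorm with neutral element $1/4$; and $U_2(N_2(x),y)=U_1(N_1(x),y)$ for all $x,y\in[0,1]$.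
   Context: A fuzzy negation is a non-increasing map $N:[0,1]\to[0,1]$ with $N(0)=1$, $N(1)=0$. A uninorm is a map $U:[0,1]^2\to[0,1]$ that is commutative, associative, non-decreasing in each variable, and has a neutral element $e\in[0,1]$; it is disjunctive if $U(1,0)=1$. For a uninorm with neutral element $e\in\,]0,1[$, the underlying t-norm is $T_U(x,y)=U(ex,ey)/e$ and the underlying t-conorm is $S_U(x,y)=(U(e+(1-e)x,e+(1-e)y)-e)/(1-e)$; $U$ has continuous underlying functions if both are continuous. *)

From Stdlib Require Import Reals Lra ClassicalEpsilon.
Open Scope R_scope.

Definition I01 (x : R) : Prop := 0 <= x <= 1.

(* f^(n)(x) = x^(2^n) on [0,1]; x^(positive real) at 0 is 0. *)
Definition fpow (n : Z) (x : R) : R :=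
  if Req_EM_T x 0 then 0 else Rpower x (powerRZ 2 n).

Definition u (n : Z) : R := Rpower 2 (- powerRZ 2 n).

Definition idx (x : R) : Z :=
  epsilon (inhabits 0%Z) (fun n : Z => u (n + 1) < x <= u n).

Definition U1 (x y : R) : R :=
  if Req_EM_T (Rmax x y) 1 then 1
  else if Req_EM_T (Rmin x y) 0 then 0
  else let n := idx x in let m := idx y in
       fpow (n + m) (Rmin (fpow (- n) x) (fpow (- m) y)).

Definition is_uninorm (U : R -> R -> R) (e : R) : Prop :=
  I01 e /\
  (forall x y, I01 x -> I01 y -> I01 (U x y)) /\
  (forall x y, I01 x -> I01 y -> U x y = U y x) /\
  (forall x y z, I01 x -> I01 y -> I01 z -> U x (U y z) = U (U x y) z) /\
  (forall x x' y y', I01 x -> I01 x' -> I01 y -> I01 y' ->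
      x <= x' -> y <= y' -> U x y <= U x' y') /\
  (forall x, I01 x -> U e x = x /\ U x e = x).

Definition disjunctive (U : R -> R -> R) : Prop := U 1 0 = 1.

Definition fuzzy_negation (N : R -> R) : Prop :=
  (forall x, I01 x -> I01 (N x)) /\
  (forall x y, I01 x -> I01 y -> x <= y -> N y <= N x) /\
  N 0 = 1 /\ N 1 = 0.

Definition strictly_decreasing01 (N : R -> R) : Prop :=
  forall x y, I01 x -> I01 y -> x < y -> N y < N x.

Definition strictly_increasing01 (g : R -> R) : Prop :=
  forall x y, I01 x -> I01 y -> x < y -> g x < g y.

Definition continuous01 (g : R -> R) : Prop :=
  forall x, I01 x -> forall eps, 0 < eps -> exists delta, 0 < delta /\
    forall y, I01 y -> Rabs (y - x) < delta -> Rabs (g y - g x) < eps.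

Definition continuous01_2 (F : R -> R -> R) : Prop :=
  forall x y, I01 x -> I01 y -> forall eps, 0 < eps -> exists delta, 0 < delta /\
    forall x' y', I01 x' -> I01 y' -> Rabs (x' - x) < delta -> Rabs (y' - y) < delta ->
      Rabs (F x' y' - F x y) < eps.

Definition underlying_tnorm (U : R -> R -> R) (e : R) (x y : R) : R :=
  U (e * x) (e * y) / e.

Definition underlying_tconorm (U : R -> R -> R) (e : R) (x y : R) : R :=
  (U (e + (1 - e) * x) (e + (1 - e) * y) - e) / (1 - e).

Definition has_continuous_underlying (U : R -> R -> R) (e : R) : Prop :=
  continuous01_2 (underlying_tnorm U e) /\ continuous01_2 (underlying_tconorm U e).

Definition log2 (x : R) : R := ln x / ln 2.

Definition N1 (x : R) : R :=
  if Req_EM_T x 0 then 1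
  else if Req_EM_T x 1 then 0
  else Rpower 2 (- Rpower 2 (- log2 (- log2 x))).

Definition N2 (x : R) : R := (N1 x) ^ 2.

Definition U2 (x y : R) : R := U1 (Rpower 2 (- (1 / 2))) (U1 x y).

From Stdlib Require Import Reals Lra Lia ClassicalEpsilon.
Open Scope R_scope.

(* The increasing bijection psi t = 2^(-2^(-t)) of R onto ]0,1[, with inverse
   phi x = -log2(-log2 x), sends u^(n) to -n and conjugates f^(n) to t |-> t - n and N1 to
   t |-> -t.  On ]0,1[^2 it conjugates U1 to the operation on R that adds ceilings and takes
   the minimum of the fractional parts t - ceil t; this is commutative, associative and
   monotone, and an integer k acts on it by translation.  As 1 is absorbing and 0 is
   absorbing below 1, U1 is a uninorm with neutral element psi 0 = 1/2, and
   U1(u^(n), u^(m)) = u^(n+m).  So u^(-1) is invertible with inverse u^(1) = 1/4, which makes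
   U2 = U1(u^(-1), U1(_, _)) a uninorm with neutral element 1/4; as N2 = U1(u^(1), N1 _),
   the identity U2(N2 x, y) = U1(N1 x, y) is associativity.  The underlying t-norm is
   discontinuous at (1/2, 1/2): U1 is idempotent on ]1/4, 1/2], while U1(1/4, 1/4) = 1/16.
   Cuts and negations are continuous because they are strictly monotone and onto. *)

Definition open01 (x : R) : Prop := 0 < x < 1.

Definition onto01 (g : R -> R) : Prop :=
  forall z, I01 z -> exists y, I01 y /\ g y = z.

Lemma I01_cases x : I01 x -> x = 0 \/ x = 1 \/ open01 x.
Proof.
  unfold I01, open01; intros Hx.
  destruct (Req_dec x 0); auto. destruct (Req_dec x 1); auto. right; right; lra.
Qed.

Lemma open01_I01 x : open01 x -> I01 x.
Proof. unfold open01, I01; lra. Qed.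

Section BoundaryExtension.

Variable U : R -> R -> R.

Hypothesis U_1l : forall y, I01 y -> U 1 y = 1.
Hypothesis U_1r : forall x, I01 x -> U x 1 = 1.
Hypothesis U_0l : forall y, I01 y -> y < 1 -> U 0 y = 0.
Hypothesis U_0r : forall x, I01 x -> x < 1 -> U x 0 = 0.
Hypothesis U_open01 : forall x y, open01 x -> open01 y -> open01 (U x y).
Hypothesis U_comm_open01 : forall x y, open01 x -> open01 y -> U x y = U y x.
Hypothesis U_assoc_open01 : forall x y z, open01 x -> open01 y -> open01 z ->
  U x (U y z) = U (U x y) z.
Hypothesis U_mono_open01 : forall x x' y, open01 x -> open01 x' -> open01 y ->
  x <= x' -> U x y <= U x' y.

Lemma boundary_ext_range x y : I01 x -> I01 y -> I01 (U x y) /\ (x < 1 -> y < 1 -> U x y < 1).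
Proof.
  intros Hx Hy.
  destruct (I01_cases x Hx) as [-> | [-> | Hx']];
  [destruct (I01_cases y Hy) as [-> | [-> | Hy']] | |
   destruct (I01_cases y Hy) as [-> | [-> | Hy']]].
  all: try (rewrite U_1l by assumption; unfold I01; split; lra).
  all: try (rewrite U_1r by assumption; unfold I01; split; lra).
  all: try (rewrite U_0l by (unfold I01, open01 in *; lra); unfold I01; split; lra).
  all: try (rewrite U_0r by (unfold I01, open01 in *; lra); unfold I01; split; lra).
  pose proof (U_open01 x y Hx' Hy'). unfold open01, I01 in *. split; lra.
Qed.

Lemma boundary_ext_comm x y : I01 x -> I01 y -> U x y = U y x.
Proof.
  intros Hx Hy.
  destruct (I01_cases x Hx) as [-> | [-> | Hx']];
  destruct (I01_cases y Hy) as [-> | [-> | Hy']];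
  rewrite ?U_1l, ?U_1r, ?U_0l, ?U_0r; unfold open01, I01 in *; try lra; auto.
Qed.

Lemma boundary_ext_assoc x y z : I01 x -> I01 y -> I01 z -> U x (U y z) = U (U x y) z.
Proof.
  intros Hx Hy Hz.
  destruct (boundary_ext_range x y Hx Hy) as [Hxy Hxy1].
  destruct (boundary_ext_range y z Hy Hz) as [Hyz Hyz1].
  destruct (Req_dec x 1) as [-> | Hx1]; [rewrite !U_1l; auto |].
  destruct (Req_dec z 1) as [-> | Hz1]; [rewrite !U_1r; auto |].
  destruct (Req_dec y 1) as [-> | Hy1]; [rewrite U_1l, U_1r, U_1l; auto |].
  assert (Hlt : x < 1 /\ y < 1 /\ z < 1) by (unfold I01 in *; lra).
  destruct Hlt as (Hx1' & Hy1' & Hz1').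
  destruct (Req_dec x 0) as [-> | Hx0]; [rewrite !U_0l; auto |].
  destruct (Req_dec z 0) as [-> | Hz0]; [rewrite !U_0r; auto |].
  destruct (Req_dec y 0) as [-> | Hy0]; [rewrite U_0l, U_0r, U_0l; auto |].
  apply U_assoc_open01; unfold open01, I01 in *; lra.
Qed.

Lemma boundary_ext_mono x x' y y' : I01 x -> I01 x' -> I01 y -> I01 y' ->
  x <= x' -> y <= y' -> U x y <= U x' y'.
Proof.
  intros Hx Hx' Hy Hy' Hxx' Hyy'.
  destruct (boundary_ext_range x y Hx Hy) as [Hxy _].
  destruct (boundary_ext_range x' y' Hx' Hy') as [Hxy' _].
  destruct (Req_dec x' 1) as [-> | Hx1]; [rewrite U_1l by assumption; apply Hxy |].
  destruct (Req_dec y' 1) as [-> | Hy1]; [rewrite U_1r by assumption; apply Hxy |].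
  destruct (Req_dec x 0) as [-> | Hx0];
    [rewrite U_0l by (unfold I01 in *; lra); apply Hxy' |].
  destruct (Req_dec y 0) as [-> | Hy0];
    [rewrite U_0r by (unfold I01 in *; lra); apply Hxy' |].
  assert (Hopen : open01 x /\ open01 x' /\ open01 y /\ open01 y')
    by (unfold open01, I01 in *; lra).
  destruct Hopen as (Ox & Ox' & Oy & Oy').
  apply Rle_trans with (U x' y); [apply U_mono_open01; assumption |].
  rewrite !(U_comm_open01 x') by assumption. apply U_mono_open01; assumption.
Qed.

Lemma boundary_ext_uninorm e : open01 e -> (forall x, open01 x -> U e x = x) -> is_uninorm U e.
Proof.
  intros He Hneutral.
  assert (HeI : I01 e) by (apply open01_I01; assumption).
  split; [assumption |].
  split; [intros x y Hx Hy; apply (boundary_ext_range x y Hx Hy) |].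
  split; [exact boundary_ext_comm |].
  split; [exact boundary_ext_assoc |].
  split; [exact boundary_ext_mono |].
  intros x Hx. rewrite (boundary_ext_comm x e) by assumption.
  destruct (I01_cases x Hx) as [-> | [-> | Hx']].
  - rewrite U_0r; [split; reflexivity | assumption | apply He].
  - rewrite U_1r; [split; reflexivity | assumption].
  - rewrite Hneutral; [split; reflexivity | assumption].
Qed.

End BoundaryExtension.

Section UninormTranslate.

Variables (U : R -> R -> R) (e : R).
Hypothesis HU : is_uninorm U e.

Let U_I01 : forall x y, I01 x -> I01 y -> I01 (U x y).
Proof. apply HU. Qed.
Let U_comm : forall x y, I01 x -> I01 y -> U x y = U y x.
Proof. apply HU. Qed.
Let U_assoc : forall x y z, I01 x -> I01 y -> I01 z -> U x (U y z) = U (U x y) z.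
Proof. apply HU. Qed.
Let U_mono : forall x x' y y', I01 x -> I01 x' -> I01 y -> I01 y' ->
  x <= x' -> y <= y' -> U x y <= U x' y'.
Proof. apply HU. Qed.
Let U_neutral : forall x, I01 x -> U e x = x.
Proof. apply HU. Qed.

Lemma uninorm_left_comm x y z : I01 x -> I01 y -> I01 z -> U x (U y z) = U y (U x z).
Proof.
  intros Hx Hy Hz. rewrite !U_assoc, (U_comm x y); auto.
Qed.

Lemma disjunctive_absorb_1 x : disjunctive U -> I01 x -> U x 1 = 1.
Proof.
  intros Hdisj Hx. assert (H0 : I01 0) by (unfold I01; lra). assert (H1 : I01 1) by (unfold I01; lra).
  assert (H01 : U 0 1 = 1) by (rewrite U_comm; assumption).
  assert (Hle : U 0 1 <= U x 1) by (apply U_mono; auto; [apply Hx | apply Rle_refl]).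
  pose proof (U_I01 x 1 Hx H1). unfold I01 in *. lra.
Qed.

Lemma uninorm_translate c d : I01 c -> I01 d -> U c d = e ->
  is_uninorm (fun x y => U c (U x y)) d.
Proof.
  intros Hc Hd Hcd.
  split; [assumption |].
  split; [auto |].
  split; [intros x y Hx Hy; rewrite (U_comm x y); auto |].
  split.
  { intros x y z Hx Hy Hz.
    rewrite (uninorm_left_comm x c), (U_assoc x y z), <- (U_assoc c (U x y) z); auto. }
  split; [intros x x' y y' **; apply U_mono; auto; apply Rle_refl |].
  intros x Hx. rewrite (U_comm x d), U_assoc, Hcd, U_neutral by auto. split; reflexivity.
Qed.

Lemma disjunctive_translate c : disjunctive U -> I01 c -> disjunctive (fun x y => U c (U x y)).
Proof.
  intros Hdisj Hc. unfold disjunctive. rewrite Hdisj. apply disjunctive_absorb_1; assumption.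
Qed.

Lemma uninorm_translate_cancel c d a y : I01 c -> I01 d -> I01 a -> I01 y -> U c d = e ->
  U c (U (U d a) y) = U a y.
Proof.
  intros Hc Hd Ha Hy Hcd. rewrite <- U_assoc, U_assoc, Hcd, U_neutral; auto.
Qed.

End UninormTranslate.

Lemma strictly_increasing01_le g x y : strictly_increasing01 g -> I01 x -> I01 y -> x <= y ->
  g x <= g y.
Proof.
  intros Hg Hx Hy [Hxy | ->]; [left; apply Hg |]; auto; apply Rle_refl.
Qed.

Lemma strictly_increasing01_range g : strictly_increasing01 g -> g 0 = 0 -> g 1 = 1 ->
  forall x, I01 x -> I01 (g x).
Proof.
  intros Hg H0 H1 x Hx.
  assert (HI0 : I01 0) by (unfold I01; lra). assert (HI1 : I01 1) by (unfold I01; lra).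
  pose proof (strictly_increasing01_le g 0 x Hg HI0 Hx (proj1 Hx)).
  pose proof (strictly_increasing01_le g x 1 Hg Hx HI1 (proj2 Hx)).
  unfold I01. lra.
Qed.

Lemma strictly_increasing01_lower g x eps : strictly_increasing01 g -> onto01 g ->
  g 0 = 0 -> g 1 = 1 -> I01 x -> 0 < eps ->
  exists delta, 0 < delta /\ forall y, I01 y -> x - delta < y -> g x - eps < g y.
Proof.
  intros Hg Hon H0 H1 Hx Heps.
  pose proof (strictly_increasing01_range g Hg H0 H1) as Hrange.
  destruct (Rlt_le_dec (g x - eps) 0) as [Hneg | Hnneg].
  { exists 1. split; [lra |]. intros y Hy _. pose proof (Hrange y Hy). unfold I01 in *. lra. }
  destruct (Hon (g x - eps)) as [p [Hp Hgp]].
  { pose proof (Hrange x Hx). unfold I01 in *. lra. }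
  assert (Hpx : p < x).
  { apply Rnot_le_lt. intros Hxp. pose proof (strictly_increasing01_le g x p Hg Hx Hp Hxp). lra. }
  exists (x - p). split; [lra |].
  intros y Hy Hpy. rewrite <- Hgp. apply Hg; [assumption | assumption | lra].
Qed.

Lemma strictly_increasing01_continuous g : strictly_increasing01 g -> onto01 g ->
  g 0 = 0 -> g 1 = 1 -> continuous01 g.
Proof.
  intros Hg Hon H0 H1 x Hx eps Heps.
  (* the lower estimate for the reflection [h] is the upper estimate for [g] *)
  set (h y := 1 - g (1 - y)).
  assert (Hh : strictly_increasing01 h).
  { intros y y' Hy Hy' Hyy'. unfold h.
    assert (I01 (1 - y) /\ I01 (1 - y')) as [Hy1 Hy1'] by (unfold I01 in *; lra).
    pose proof (Hg _ _ Hy1' Hy1 ltac:(lra)). lra. }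
  assert (Hhon : onto01 h).
  { intros z Hz. destruct (Hon (1 - z)) as [y [Hy Hgy]]; [unfold I01 in *; lra |].
    exists (1 - y). split; [unfold I01 in *; lra |]. unfold h.
    replace (1 - (1 - y)) with y by ring. lra. }
  assert (Hx' : I01 (1 - x)) by (unfold I01 in *; lra).
  destruct (strictly_increasing01_lower g x eps Hg Hon H0 H1 Hx Heps) as [d1 [Hd1 Hlow]].
  destruct (strictly_increasing01_lower h (1 - x) eps Hh Hhon) as [d2 [Hd2 Hup]];
    [unfold h; rewrite Rminus_0_r, H1; ring | unfold h; rewrite Rminus_diag, H0; ring | assumption | assumption |].
  exists (Rmin d1 d2). split; [apply Rmin_glb_lt; assumption |].
  intros y Hy Hyx. pose proof (Rmin_l d1 d2). pose proof (Rmin_r d1 d2).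
  apply Rabs_def2 in Hyx as [Hyx1 Hyx2].
  pose proof (Hlow y Hy ltac:(lra)).
  assert (Hy' : I01 (1 - y)) by (unfold I01 in *; lra).
  pose proof (Hup (1 - y) Hy' ltac:(lra)) as Hhy. unfold h in Hhy.
  replace (1 - (1 - x)) with x in Hhy by ring. replace (1 - (1 - y)) with y in Hhy by ring.
  apply Rabs_def1; lra.
Qed.

Lemma strictly_decreasing01_continuous g : strictly_decreasing01 g -> onto01 g ->
  g 0 = 1 -> g 1 = 0 -> continuous01 g.
Proof.
  intros Hg Hon H0 H1.
  assert (Hc : continuous01 (fun y => 1 - g y)).
  { apply strictly_increasing01_continuous; [| | rewrite H0; ring | rewrite H1; ring].
    - intros x y Hx Hy Hxy. pose proof (Hg x y Hx Hy Hxy). lra.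
    - intros z Hz. destruct (Hon (1 - z)) as [y [Hy Hgy]]; [unfold I01 in *; lra |].
      exists y. split; [assumption | lra]. }
  intros x Hx eps Heps. destruct (Hc x Hx eps Heps) as [d [Hd Hcont]].
  exists d. split; [assumption |]. intros y Hy Hyx.
  replace (g y - g x) with (- ((1 - g y) - (1 - g x))) by ring. rewrite Rabs_Ropp.
  apply Hcont; assumption.
Qed.

Lemma strictly_decreasing_negation N : strictly_decreasing01 N -> onto01 N ->
  N 0 = 1 -> N 1 = 0 -> fuzzy_negation N /\ continuous01 N /\ strictly_decreasing01 N.
Proof.
  intros HN Hon H0 H1.
  assert (Hg : strictly_increasing01 (fun y => 1 - N y))
    by (intros x y Hx Hy Hxy; pose proof (HN x y Hx Hy Hxy); lra).
  assert (Hrange : forall x, I01 x -> I01 (1 - N x))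
    by (apply strictly_increasing01_range; [assumption | rewrite H0 | rewrite H1]; ring).
  split; [split; [| split; [| split]] | split]; try assumption.
  - intros x Hx. pose proof (Hrange x Hx). unfold I01 in *. lra.
  - intros x y Hx Hy Hxy. pose proof (strictly_increasing01_le _ x y Hg Hx Hy Hxy). lra.
  - apply strictly_decreasing01_continuous; assumption.
Qed.

Definition zceil (t : R) : Z := (- Int_part (- t))%Z.

Lemma zceil_spec t : IZR (zceil t) - 1 < t <= IZR (zceil t).
Proof. unfold zceil. rewrite opp_IZR. destruct (base_Int_part (- t)). lra. Qed.

Lemma zceil_unique t k : IZR k - 1 < t <= IZR k -> zceil t = k.
Proof.
  intros Hk. pose proof (zceil_spec t).
  assert (Hlt1 : IZR (zceil t - k) < 1) by (rewrite minus_IZR; lra).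
  assert (Hlt2 : IZR (k - zceil t) < 1) by (rewrite minus_IZR; lra).
  apply lt_IZR in Hlt1, Hlt2. lia.
Qed.

Lemma zceil_add_IZR t k : zceil (t + IZR k) = (zceil t + k)%Z.
Proof. apply zceil_unique. rewrite plus_IZR. pose proof (zceil_spec t). lra. Qed.

Lemma zceil_IZR k : zceil (IZR k) = k.
Proof. apply zceil_unique; lra. Qed.

Lemma zceil_le s t : s <= t -> (zceil s <= zceil t)%Z.
Proof.
  intros Hst. pose proof (zceil_spec s). pose proof (zceil_spec t).
  assert (Hlt : IZR (zceil s - zceil t) < 1) by (rewrite minus_IZR; lra).
  apply lt_IZR in Hlt. lia.
Qed.

Definition zfrac (t : R) : R := t - IZR (zceil t).

Lemma zfrac_range t : -1 < zfrac t <= 0.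
Proof. unfold zfrac. pose proof (zceil_spec t). lra. Qed.

Definition shift_min (a b : R) : R := Rmin (zfrac a) (zfrac b) + IZR (zceil a + zceil b).

Lemma zceil_shift_min a b : zceil (shift_min a b) = (zceil a + zceil b)%Z.
Proof.
  unfold shift_min. rewrite zceil_add_IZR, (zceil_unique _ 0); [lia|].
  destruct (zfrac_range a) as [Ha Ha0]; destruct (zfrac_range b) as [Hb _].
  pose proof (Rmin_l (zfrac a) (zfrac b)). pose proof (Rmin_glb_lt _ _ _ Ha Hb).
  lra.
Qed.

Lemma zfrac_shift_min a b : zfrac (shift_min a b) = Rmin (zfrac a) (zfrac b).
Proof. unfold zfrac at 1. rewrite zceil_shift_min. unfold shift_min. ring. Qed.

Lemma shift_min_comm a b : shift_min a b = shift_min b a.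
Proof. unfold shift_min. rewrite Rmin_comm, Z.add_comm. reflexivity. Qed.

Lemma shift_min_assoc a b c : shift_min a (shift_min b c) = shift_min (shift_min a b) c.
Proof.
  unfold shift_min at 1 3. rewrite !zceil_shift_min, !zfrac_shift_min, Rmin_assoc.
  f_equal. f_equal. lia.
Qed.

Lemma shift_min_IZR_l k b : shift_min (IZR k) b = b + IZR k.
Proof.
  unfold shift_min, zfrac at 1. rewrite zceil_IZR, Rminus_diag, Rmin_right, plus_IZR
    by (pose proof (zfrac_range b); lra).
  unfold zfrac. ring.
Qed.

Lemma shift_min_le_l a a' b : a <= a' -> shift_min a b <= shift_min a' b.
Proof.
  intros Ha. pose proof (zfrac_range a); pose proof (zfrac_range a'); pose proof (zfrac_range b).
  unfold shift_min. rewrite !plus_IZR.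
  destruct (Z.eq_dec (zceil a) (zceil a')) as [Heq | Hne].
  - rewrite Heq. apply Rplus_le_compat_r, Rle_min_compat_r.
    unfold zfrac. rewrite Heq. lra.
  - assert (Hgap : IZR (zceil a) + 1 <= IZR (zceil a'))
      by (rewrite <- plus_IZR; apply IZR_le; pose proof (zceil_le a a' Ha); lia).
    pose proof (Rmin_l (zfrac a) (zfrac b)).
    pose proof (Rmin_glb_lt (zfrac a') (zfrac b) (-1) ltac:(lra) ltac:(lra)).
    lra.
Qed.

Lemma shift_min_idem a : zceil a = 0%Z -> shift_min a a = a.
Proof.
  intros Ha. unfold shift_min, zfrac. rewrite Rmin_left, Ha by lra. simpl. ring.
Qed.

Definition psi (t : R) : R := Rpower 2 (- Rpower 2 (- t)).
Definition phi (x : R) : R := - log2 (- log2 x).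

Lemma ln2_pos : 0 < ln 2.
Proof. rewrite <- ln_1. apply ln_increasing; lra. Qed.

Lemma psi_open01 t : open01 (psi t).
Proof.
  unfold open01, psi, Rpower at 1. split; [apply exp_pos|].
  rewrite <- exp_0. apply exp_increasing.
  pose proof (exp_pos (- t * ln 2)). pose proof ln2_pos. unfold Rpower. nra.
Qed.

Lemma psi_lt s t : s < t -> psi s < psi t.
Proof.
  intros Hst. unfold psi. apply Rpower_lt; [lra|].
  apply Ropp_lt_contravar, Rpower_lt; lra.
Qed.

Lemma psi_lt_iff s t : psi s < psi t <-> s < t.
Proof.
  split; [|apply psi_lt]. intros Hp. apply Rnot_le_lt. intros [Hts | ->]; [apply psi_lt in Hts|]; lra.
Qed.

Lemma psi_le_iff s t : psi s <= psi t <-> s <= t.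
Proof.
  split; intros H; apply Rnot_lt_le; intros H'; [apply psi_lt in H' | rewrite psi_lt_iff in H']; lra.
Qed.

Lemma phi_psi t : phi (psi t) = t.
Proof.
  pose proof ln2_pos. unfold phi, psi, log2, Rpower at 1. rewrite ln_exp.
  replace (- (- Rpower 2 (- t) * ln 2 / ln 2)) with (Rpower 2 (- t)) by (field; lra).
  unfold Rpower. rewrite ln_exp. field; lra.
Qed.

Lemma psi_phi x : open01 x -> psi (phi x) = x.
Proof.
  intros Hx. pose proof ln2_pos. unfold open01, phi, psi, log2 in *.
  assert (Hlnx : ln x < 0) by (rewrite <- ln_1; apply ln_increasing; lra).
  assert (Hpos : 0 < - (ln x / ln 2))
    by (unfold Rdiv; pose proof (Rinv_0_lt_compat _ ln2_pos); nra).
  rewrite Ropp_involutive. unfold Rpower at 2.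
  replace (ln (- (ln x / ln 2)) / ln 2 * ln 2) with (ln (- (ln x / ln 2))) by (field; lra).
  rewrite exp_ln by lra. unfold Rpower.
  replace (- - (ln x / ln 2) * ln 2) with (ln x) by (field; lra).
  apply exp_ln; lra.
Qed.

Lemma phi_lt_iff x y : open01 x -> open01 y -> phi x < phi y <-> x < y.
Proof.
  intros Hx Hy. rewrite <- psi_lt_iff, !psi_phi by assumption. reflexivity.
Qed.

Lemma phi_le_iff x y : open01 x -> open01 y -> phi x <= phi y <-> x <= y.
Proof.
  intros Hx Hy. rewrite <- psi_le_iff, !psi_phi by assumption. reflexivity.
Qed.

Lemma psi_min s t : Rmin (psi s) (psi t) = psi (Rmin s t).
Proof.
  destruct (Rle_dec s t) as [Hst | Hts].
  - rewrite !Rmin_left; [reflexivity | assumption | apply psi_le_iff; assumption].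
  - rewrite !Rmin_right; [reflexivity | lra | apply psi_le_iff; lra].
Qed.

Lemma u_psi n : u n = psi (- IZR n).
Proof. unfold u, psi. rewrite Ropp_involutive, powerRZ_Rpower by lra. reflexivity. Qed.

Lemma phi_u n : phi (u n) = - IZR n.
Proof. rewrite u_psi. apply phi_psi. Qed.

Lemma u_open01 n : open01 (u n).
Proof. rewrite u_psi. apply psi_open01. Qed.

Lemma fpow_psi n t : fpow n (psi t) = psi (t - IZR n).
Proof.
  unfold fpow. destruct Req_EM_T as [H0 | _].
  - pose proof (psi_open01 t). unfold open01 in *. lra.
  - rewrite powerRZ_Rpower by lra. unfold psi at 1. rewrite Rpower_mult.
    unfold psi. f_equal.
    replace (- (t - IZR n)) with (- t + IZR n) by ring. rewrite Rpower_plus. ring.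
Qed.

Lemma fpow_open01 n x : open01 x -> fpow n x = psi (phi x - IZR n).
Proof. intros Hx. rewrite <- fpow_psi, psi_phi by assumption. reflexivity. Qed.

Lemma fpow_0 n : fpow n 0 = 0.
Proof. unfold fpow. destruct Req_EM_T; lra. Qed.

Lemma fpow_1 n : fpow n 1 = 1.
Proof.
  unfold fpow. destruct Req_EM_T; [lra|].
  unfold Rpower. rewrite ln_1, Rmult_0_r. apply exp_0.
Qed.

Lemma u_block_iff n x : open01 x -> (u (n + 1) < x <= u n <-> zceil (phi x) = (- n)%Z).
Proof.
  intros Hx. rewrite <- (psi_phi x) at 1 2 by assumption.
  rewrite !u_psi, psi_lt_iff, psi_le_iff.
  split.
  - intros Hn. apply zceil_unique. rewrite opp_IZR, plus_IZR in *. lra.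
  - intros Hn. pose proof (zceil_spec (phi x)) as Hc. rewrite Hn, opp_IZR in Hc.
    rewrite plus_IZR. lra.
Qed.

Lemma idx_open01 x : open01 x -> idx x = (- zceil (phi x))%Z.
Proof.
  intros Hx. enough (Hidx : zceil (phi x) = (- idx x)%Z) by lia.
  apply u_block_iff; [assumption |]. unfold idx. apply epsilon_spec.
  exists (- zceil (phi x))%Z. apply u_block_iff; [assumption | lia].
Qed.

Lemma U1_open01 x y : open01 x -> open01 y -> U1 x y = psi (shift_min (phi x) (phi y)).
Proof.
  intros Hx Hy. unfold U1.
  destruct Req_EM_T as [Hmax | _].
  { unfold open01, Rmax in *. destruct Rle_dec in Hmax; lra. }
  destruct Req_EM_T as [Hmin | _].
  { unfold open01, Rmin in *. destruct Rle_dec in Hmin; lra. }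
  cbv zeta. rewrite !idx_open01 by assumption.
  rewrite <- (psi_phi x), <- (psi_phi y) by assumption. rewrite !phi_psi.
  rewrite !fpow_psi, psi_min, fpow_psi. f_equal.
  unfold shift_min, zfrac. rewrite !Z.opp_involutive, plus_IZR, !opp_IZR, plus_IZR. ring.
Qed.

Lemma U1_1l y : I01 y -> U1 1 y = 1.
Proof.
  unfold I01, U1; intros Hy. destruct Req_EM_T as [_ | Hmax]; [reflexivity |].
  exfalso; apply Hmax. apply Rmax_left. lra.
Qed.

Lemma U1_1r x : I01 x -> U1 x 1 = 1.
Proof.
  unfold I01, U1; intros Hx. destruct Req_EM_T as [_ | Hmax]; [reflexivity |].
  exfalso; apply Hmax. apply Rmax_right. lra.
Qed.

Lemma U1_0l y : I01 y -> y < 1 -> U1 0 y = 0.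
Proof.
  unfold I01, U1; intros Hy Hy1. destruct Req_EM_T as [Hmax | _].
  { rewrite Rmax_right in Hmax; lra. }
  destruct Req_EM_T as [_ | Hmin]; [reflexivity |].
  exfalso; apply Hmin. apply Rmin_left. lra.
Qed.

Lemma U1_0r x : I01 x -> x < 1 -> U1 x 0 = 0.
Proof.
  unfold I01, U1; intros Hx Hx1. destruct Req_EM_T as [Hmax | _].
  { rewrite Rmax_left in Hmax; lra. }
  destruct Req_EM_T as [_ | Hmin]; [reflexivity |].
  exfalso; apply Hmin. apply Rmin_right. lra.
Qed.

Lemma fpow_strictly_increasing n : strictly_increasing01 (fpow n).
Proof.
  intros x y Hx Hy Hxy.
  destruct (I01_cases x Hx) as [-> | [-> | Ox]]; [| unfold I01 in *; lra |];
  destruct (I01_cases y Hy) as [-> | [-> | Oy]]; try (unfold open01 in *; lra);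
  rewrite ?fpow_0, ?fpow_1, ?(fpow_open01 n y) by assumption; try lra.
  - apply psi_open01.
  - rewrite fpow_open01 by assumption. apply psi_open01.
  - rewrite fpow_open01 by assumption. apply psi_lt, Rplus_lt_compat_r, phi_lt_iff; assumption.
Qed.

Lemma fpow_onto n : onto01 (fpow n).
Proof.
  intros z Hz. destruct (I01_cases z Hz) as [-> | [-> | Oz]].
  - exists 0. split; [unfold I01; lra | apply fpow_0].
  - exists 1. split; [unfold I01; lra | apply fpow_1].
  - exists (psi (phi z + IZR n)). split; [apply open01_I01, psi_open01 |].
    rewrite fpow_psi. replace (phi z + IZR n - IZR n) with (phi z) by ring.
    apply psi_phi; assumption.
Qed.

Lemma U1_cut n y : I01 y -> U1 (u n) y = fpow n y.
Proof.
  intros Hy. pose proof (u_open01 n) as Ou.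
  destruct (I01_cases y Hy) as [-> | [-> | Oy]].
  - rewrite fpow_0. apply U1_0r; [apply open01_I01, Ou | apply Ou].
  - rewrite fpow_1. apply U1_1r, open01_I01, Ou.
  - rewrite U1_open01, fpow_open01, phi_u, <- opp_IZR, shift_min_IZR_l, opp_IZR by assumption.
    reflexivity.
Qed.

Lemma U1_u n m : U1 (u n) (u m) = u (n + m).
Proof.
  rewrite U1_cut, u_psi, fpow_psi, u_psi, plus_IZR by apply open01_I01, u_open01.
  f_equal. ring.
Qed.

Lemma U1_uninorm_u0 : is_uninorm U1 (u 0).
Proof.
  apply boundary_ext_uninorm.
  - exact U1_1l.
  - exact U1_1r.
  - exact U1_0l.
  - exact U1_0r.
  - intros x y Ox Oy. rewrite U1_open01 by assumption. apply psi_open01.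
  - intros x y Ox Oy. rewrite !U1_open01, shift_min_comm by assumption. reflexivity.
  - intros x y z Ox Oy Oz.
    rewrite (U1_open01 y z), (U1_open01 x y), !U1_open01, !phi_psi, shift_min_assoc
      by (assumption || apply psi_open01).
    reflexivity.
  - intros x x' y Ox Ox' Oy Hxx'. rewrite !U1_open01 by assumption.
    apply psi_le_iff, shift_min_le_l, phi_le_iff; assumption.
  - apply u_open01.
  - intros x Ox. rewrite U1_cut, fpow_open01, Rminus_0_r by (assumption || apply open01_I01; assumption).
    apply psi_phi; assumption.
Qed.

Lemma u_nat n k : powerRZ 2 n = INR k -> u n = / 2 ^ k.
Proof. intros Hk. unfold u. rewrite Hk, Rpower_Ropp, Rpower_pow by lra. reflexivity. Qed.

Lemma u_0 : u 0 = 1 / 2.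
Proof. rewrite (u_nat 0 1) by reflexivity. simpl. field. Qed.

Lemma u_1 : u 1 = 1 / 4.
Proof. rewrite (u_nat 1 2) by (simpl; ring). simpl. field. Qed.

Lemma u_2 : u 2 = 1 / 16.
Proof. rewrite (u_nat 2 4) by (simpl; ring). simpl. field. Qed.

Lemma u_neg1 : u (-1) = Rpower 2 (- (1 / 2)).
Proof. unfold u. simpl. f_equal. field. Qed.

Lemma U1_idempotent x : u 1 < x <= u 0 -> U1 x x = x.
Proof.
  intros Hx. pose proof (u_open01 0). pose proof (u_open01 1).
  assert (Ox : open01 x) by (unfold open01 in *; lra).
  rewrite U1_open01, shift_min_idem by (try apply (u_block_iff 0); assumption).
  apply psi_phi; assumption.
Qed.

Lemma U1_tnorm_discontinuous : ~ continuous01_2 (underlying_tnorm U1 (1 / 2)).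
Proof.
  intros Hcont. unfold underlying_tnorm in Hcont.
  destruct (Hcont (1 / 2) (1 / 2)) with (eps := 1 / 4) as [d [Hd Hnear]];
    [unfold I01; lra | unfold I01; lra | lra |].
  set (a := 1 / 2 + Rmin d (1 / 2) / 2).
  assert (Hm : 0 < Rmin d (1 / 2) <= d /\ Rmin d (1 / 2) <= 1 / 2)
    by (pose proof (Rmin_l d (1 / 2)); pose proof (Rmin_r d (1 / 2));
        pose proof (Rmin_glb_lt d (1 / 2) 0 Hd ltac:(lra)); lra).
  assert (Ha : I01 a) by (unfold a, I01; lra).
  assert (Had : Rabs (a - 1 / 2) < d) by (apply Rabs_def1; unfold a; lra).
  specialize (Hnear a a Ha Ha Had Had).
  rewrite U1_idempotent in Hnear by (rewrite u_0, u_1; unfold a; lra).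
  replace (1 / 2 * (1 / 2)) with (u 1) in Hnear by (rewrite u_1; field).
  rewrite U1_u in Hnear. simpl in Hnear. rewrite u_2 in Hnear.
  apply Rabs_def2 in Hnear. unfold a in Hnear. lra.
Qed.

Lemma N1_0 : N1 0 = 1.
Proof. unfold N1. destruct Req_EM_T; lra. Qed.

Lemma N1_1 : N1 1 = 0.
Proof. unfold N1. destruct Req_EM_T; [lra |]. destruct Req_EM_T; lra. Qed.

Lemma N1_open01 x : open01 x -> N1 x = psi (- phi x).
Proof.
  intros Ox. unfold N1, open01 in *.
  destruct Req_EM_T; [lra |]. destruct Req_EM_T; [lra |].
  unfold psi, phi. rewrite Ropp_involutive. reflexivity.
Qed.

Lemma N1_strictly_decreasing : strictly_decreasing01 N1.
Proof.
  intros x y Hx Hy Hxy.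
  destruct (I01_cases x Hx) as [-> | [-> | Ox]]; [| unfold I01 in *; lra |];
  destruct (I01_cases y Hy) as [-> | [-> | Oy]]; try (unfold open01 in *; lra);
  rewrite ?N1_0, ?N1_1, ?(N1_open01 y) by assumption; try lra.
  - apply psi_open01.
  - rewrite N1_open01 by assumption. apply psi_open01.
  - rewrite N1_open01 by assumption. apply psi_lt, Ropp_lt_contravar, phi_lt_iff; assumption.
Qed.

Lemma N1_onto : onto01 N1.
Proof.
  intros z Hz. destruct (I01_cases z Hz) as [-> | [-> | Oz]].
  - exists 1. split; [unfold I01; lra | apply N1_1].
  - exists 0. split; [unfold I01; lra | apply N1_0].
  - exists (psi (- phi z)). split; [apply open01_I01, psi_open01 |].
    rewrite N1_open01, phi_psi, Ropp_involutive by apply psi_open01.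
    apply psi_phi; assumption.
Qed.

Lemma N1_negation : fuzzy_negation N1 /\ continuous01 N1 /\ strictly_decreasing01 N1.
Proof.
  apply strictly_decreasing_negation;
    [exact N1_strictly_decreasing | exact N1_onto | exact N1_0 | exact N1_1].
Qed.

Lemma N2_fpow x : I01 x -> N2 x = fpow 1 (N1 x).
Proof.
  intros Hx. unfold N2, fpow. destruct Req_EM_T as [-> | HN]; [ring |].
  replace (powerRZ 2 1) with (INR 2) by (simpl; ring).
  rewrite Rpower_pow; [reflexivity |].
  destruct N1_negation as [[Hrange _] _]. destruct (Hrange x Hx) as [[Hpos | Hzero] _];
    [assumption | congruence].
Qed.

Lemma N2_negation : fuzzy_negation N2 /\ continuous01 N2 /\ strictly_decreasing01 N2.
Proof.
  destruct N1_negation as [[HN1 _] _].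
  apply strictly_decreasing_negation.
  - intros x y Hx Hy Hxy. rewrite !N2_fpow by assumption.
    apply fpow_strictly_increasing; [apply HN1 .. | apply N1_strictly_decreasing]; assumption.
  - intros z Hz. destruct (fpow_onto 1 z Hz) as [w [Hw Hfw]].
    destruct (N1_onto w Hw) as [x [Hx HN1x]].
    exists x. split; [assumption |]. rewrite N2_fpow, HN1x; assumption.
  - unfold N2. rewrite N1_0. ring.
  - unfold N2. rewrite N1_1. ring.
Qed.

Lemma U1_cut_strictly_increasing n : strictly_increasing01 (U1 (u n)).
Proof.
  intros x y Hx Hy Hxy. rewrite !U1_cut by assumption. apply fpow_strictly_increasing; assumption.
Qed.

Lemma U1_cut_onto n : onto01 (U1 (u n)).
Proof.
  intros z Hz. destruct (fpow_onto n z Hz) as [y [Hy Hfy]].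
  exists y. split; [| rewrite U1_cut]; assumption.
Qed.

Lemma U1_cut_continuous n : continuous01 (U1 (u n)).
Proof.
  apply strictly_increasing01_continuous;
    [apply U1_cut_strictly_increasing | apply U1_cut_onto | |];
    rewrite U1_cut; [apply fpow_0 | unfold I01; lra | apply fpow_1 | unfold I01; lra].
Qed.

Lemma U1_uninorm : is_uninorm U1 (1 / 2) /\ disjunctive U1.
Proof.
  rewrite <- u_0. split; [exact U1_uninorm_u0 |]. apply U1_1l. unfold I01; lra.
Qed.

Lemma U2_uninorm : is_uninorm U2 (1 / 4) /\ disjunctive U2.
Proof.
  unfold U2. rewrite <- u_neg1, <- u_1.
  pose proof (open01_I01 _ (u_open01 (-1))) as Hc.
  split.
  - apply (uninorm_translate U1 (u 0)); [exact U1_uninorm_u0 | assumption | |].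
    + apply open01_I01, u_open01.
    + apply U1_u.
  - apply (disjunctive_translate U1 (u 0)); [exact U1_uninorm_u0 | apply U1_uninorm | assumption].
Qed.

Lemma U2_N2 x y : I01 x -> I01 y -> U2 (N2 x) y = U1 (N1 x) y.
Proof.
  intros Hx Hy. destruct N1_negation as [[HN1 _] _].
  unfold U2. rewrite <- u_neg1, N2_fpow, <- U1_cut by auto.
  apply (uninorm_translate_cancel U1 (u 0)); try apply open01_I01, u_open01; auto.
  - exact U1_uninorm_u0.
  - apply U1_u.
Qed.

Theorem mainTheorem8 :
  (forall x, 0 < x < 1 -> exists! n : Z, u (n + 1) < x <= u n) /\
  (is_uninorm U1 (1 / 2) /\ disjunctive U1) /\
  (forall n : Z,
     (forall y, I01 y -> U1 (u n) y = fpow n y) /\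
     continuous01 (fun y => U1 (u n) y) /\
     strictly_increasing01 (fun y => U1 (u n) y) /\
     (forall z, I01 z -> exists y, I01 y /\ U1 (u n) y = z)) /\
  ~ has_continuous_underlying U1 (1 / 2) /\
  (fuzzy_negation N1 /\ continuous01 N1 /\ strictly_decreasing01 N1) /\
  (fuzzy_negation N2 /\ continuous01 N2 /\ strictly_decreasing01 N2) /\
  (is_uninorm U2 (1 / 4) /\ disjunctive U2) /\
  (forall x y, I01 x -> I01 y -> U2 (N2 x) y = U1 (N1 x) y).
Proof.
  split.
  { intros x Ox. exists (- zceil (phi x))%Z. split.
    - apply u_block_iff; [assumption | lia].
    - intros n Hn. apply u_block_iff in Hn; [lia | assumption]. }
  split; [exact U1_uninorm |].
  split.
  { intros n. split; [intros y; apply U1_cut |].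
    split; [apply U1_cut_continuous |].
    split; [apply U1_cut_strictly_increasing | apply U1_cut_onto]. }
  split; [intros [Htnorm _]; exact (U1_tnorm_discontinuous Htnorm) |].
  split; [exact N1_negation |].
  split; [exact N2_negation |].
  split; [exact U2_uninorm | exact U2_N2].
Qed.
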